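(* Fix a substructure collection $\mathcal{H}$. Let $C^V$ be the set of functions (on graphs) that can be expressed by a GSN-v with arbitrary depth and width using structural features from $\mathcal{H}$, and $C^E$ the set of functions that can be expressed by a GSN-e with arbitrary depth and width using structural features from $\mathcal{H}$. Then $C^E\supseteq C^V$, i.e. GSN-e is at least as expressive as GSN-v.
   Context: Graphs are finite, simple, with possible vertex features and edge features $\mathbf{e}_{u,v}$. For a (connected) graph $H$, its vertex orbits $O^V_{H,1},\dots,O^V_{H,d_H}$ are the classes of $\mathcal{V}_H$ under $\mathrm{Aut}(H)$; its edge orbits are the classes of ordered pairs $(u,v)$ with $\{u,v\}\in\mathcal{E}_H$ under $(u,v)\mapsto(g(u),g(v))$, $g\in\mathrm{Aut}(H)$. For a graph $G$: $x^V_{H,i}(v)=|\{G_S\subseteq G: G_S\simeq H,\ v\in\mathcal{V}_{G_S},\ f(v)\in O^V_{H,i}\}|$ and $x^E_{H,i}(u,v)=|\{G_S\subseteq G: G_S\simeq H,\ (u,v)\in\mathcal{E}_{G_S},\ (f(u),f(v))\in O^E_{H,i}\}|$, where $f:G_S\to H$ is any isomorphism. $\mathbf{x}^V_v$ and $\mathbf{x}^E_{u,v}$ are the concatenations over $H\in\mathcal{H}$ and all orbits. A GSN layer: $\mathbf{h}^{t+1}_v=\mathrm{UP}^{t+1}(\mathbf{h}^t_v,\mathbf{m}^{t+1}_v)$; for GSN-v, $\mathbf{m}^{t+1}_v=M^{t+1}(\{\!\{(\mathbf{h}^t_v,\mathbf{h}^t_u,\mathbf{x}^V_v,\mathbf{x}^V_u,\mathbf{e}_{u,v})\}\!\}_{u\in\mathcal{N}(v)})$;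 for GSN-e, $\mathbf{m}^{t+1}_v=M^{t+1}(\{\!\{(\mathbf{h}^t_v,\mathbf{h}^t_u,\mathbf{x}^E_{u,v},\mathbf{e}_{u,v})\}\!\}_{u\in\mathcal{N}(v)})$, where $\mathrm{UP}^{t+1}$ is an arbitrary function and $M^{t+1}$ an arbitrary function on multisets; $\mathbf{h}^0_v$ are input vertex features, and the network output is obtained from the final vertex states (with a readout for graph-level functions). *)

From HB Require Import structures.
From mathcomp Require Import all_boot all_order all_algebra.
From mathcomp Require Import fingroup perm reals.
From Stdlib Require Import Permutation.

Unset Printing Implicit Defensive.

Import GRing.Theory Num.Theory.
Local Open Scope ring_scope.

Record pattern := Pattern { pk : nat; padj : rel 'I_pk }.
Arguments padj : clear implicits.

Definition pattern_ok (H : pattern) : Prop :=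
  [/\ symmetric (padj H), irreflexive (padj H),
      (0 < pk H)%N & forall a b : 'I_(pk H), connect (padj H) a b].

Definition autH (H : pattern) : {set ({perm 'I_(pk H)})} :=
  [set g : {perm 'I_(pk H)} |
     [forall a, forall b, padj H (g a) (g b) == padj H a b]].

Definition vorbit (H : pattern) (u : 'I_(pk H)) : {set 'I_(pk H)} :=
  [set (g : {perm 'I_(pk H)}) u | g in autH H].

Definition vorbits (H : pattern) : {set {set 'I_(pk H)}} :=
  [set vorbit H u | u : 'I_(pk H)].

Definition eorbit (H : pattern) (p : 'I_(pk H) * 'I_(pk H))
  : {set 'I_(pk H) * 'I_(pk H)} :=
  [set ((g : {perm 'I_(pk H)}) p.1, g p.2) | g in autH H].

Definition eorbits (H : pattern) : {set {set 'I_(pk H) * 'I_(pk H)}} :=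
  [set eorbit H p | p in [set p : 'I_(pk H) * 'I_(pk H) | padj H p.1 p.2]].

Section Graphs.
Variables (R : realType) (d0 de : nat).

Record graph := Graph {
  gn : nat;
  gadj : rel 'I_gn;
  gX : 'I_gn -> 'rV[R]_d0;
  gE : 'I_gn -> 'I_gn -> 'rV[R]_de
}.


End Graphs.
Arguments gn {R d0 de} g.
Arguments gadj {R d0 de} g.
Arguments gX {R d0 de} g.
Arguments gE {R d0 de} g.

Definition simple_graph (R : realType) (d0 de : nat) (G : graph R d0 de) : Prop :=
  symmetric (gadj G) /\ irreflexive (gadj G).
Arguments simple_graph {R d0 de} G.

(* Subgraphs G_S of G (not necessarily induced) and isomorphisms to H. *)
Section Counts.
Variables (n : nat) (adj : rel 'I_n).

Definition is_subgraph (S : {set 'I_n}) (Es : {set 'I_n * 'I_n}) : bool :=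
  [forall a, forall b,
     ((a, b) \in Es) ==> [&& adj a b, a \in S, b \in S & (b, a) \in Es]].

Definition is_iso (H : pattern) (S : {set 'I_n}) (Es : {set 'I_n * 'I_n})
    (f : {ffun 'I_n -> 'I_(pk H)}) : bool :=
  [forall a in S, forall b in S, (f a == f b) ==> (a == b)]
  && (f @: S == [set: 'I_(pk H)])
  && [forall a in S, forall b in S, ((a, b) \in Es) == padj H (f a) (f b)].

(* x^V_{H,O}(v): number of subgraphs G_S ~ H with v in G_S and f(v) in O
   (O ranging over the vertex orbits of H; 0 on non-orbits). *)
Definition xV (H : pattern) (v : 'I_n) (O : {set 'I_(pk H)}) : nat :=
  if O \in vorbits H then
    #|[set SE : {set 'I_n} * {set 'I_n * 'I_n} |
        [&& is_subgraph SE.1 SE.2, v \in SE.1 &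
            [exists f : {ffun 'I_n -> 'I_(pk H)},
                is_iso H SE.1 SE.2 f && (f v \in O)]]]|
  else 0%N.

Definition xE (H : pattern) (u v : 'I_n) (O : {set 'I_(pk H) * 'I_(pk H)})
  : nat :=
  if O \in eorbits H then
    #|[set SE : {set 'I_n} * {set 'I_n * 'I_n} |
        [&& is_subgraph SE.1 SE.2, (u, v) \in SE.2 &
            [exists f : {ffun 'I_n -> 'I_(pk H)},
                is_iso H SE.1 SE.2 f && ((f u, f v) \in O)]]]|
  else 0%N.
End Counts.

(* functions on multisets = functions on lists invariant under permutation *)
Definition multiset_fun (A B : Type) (M : list A -> B) : Prop :=
  forall s1 s2 : list A, Permutation s1 s2 -> M s1 = M s2.

Section GSN.
Variables (R : realType) (J : finType) (Hs : J -> pattern) (d0 de : nat).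

Definition featV := forall j : J, {set 'I_(pk (Hs j))} -> nat.
Definition featE := forall j : J, {set 'I_(pk (Hs j)) * 'I_(pk (Hs j))} -> nat.

Definition xVG (G : graph R d0 de) (v : 'I_(gn G)) : featV :=
  fun j O => @xV (gn G) (gadj G) (Hs j) v O.
Definition xEG (G : graph R d0 de) (u v : 'I_(gn G)) : featE :=
  fun j O => @xE (gn G) (gadj G) (Hs j) u v O.

Definition msgV (d : nat) : Type :=
  ('rV[R]_d * 'rV[R]_d * featV * featV * 'rV[R]_de)%type.
Definition msgE (d : nat) : Type :=
  ('rV[R]_d * 'rV[R]_d * featE * 'rV[R]_de)%type.

Record vlayer (d1 d2 : nat) := VLayer {
  vm : nat;
  vM : list (msgV d1) -> 'rV[R]_vm;
  vM_ms : multiset_fun _ _ vM;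
  vUP : 'rV[R]_d1 -> 'rV[R]_vm -> 'rV[R]_d2 }.

Record elayer (d1 d2 : nat) := ELayer {
  em : nat;
  eM : list (msgE d1) -> 'rV[R]_em;
  eM_ms : multiset_fun _ _ eM;
  eUP : 'rV[R]_d1 -> 'rV[R]_em -> 'rV[R]_d2 }.

Inductive gsnv : nat -> Type :=
| vbase : gsnv d0
| vstep : forall d1 d2 : nat, gsnv d1 -> vlayer d1 d2 -> gsnv d2.

Inductive gsne : nat -> Type :=
| ebase : gsne d0
| estep : forall d1 d2, gsne d1 -> elayer d1 d2 -> gsne d2.

Fixpoint eval_v d (N : gsnv d) (G : graph R d0 de) : 'I_(gn G) -> 'rV[R]_d :=
  match N in gsnv d return 'I_(gn G) -> 'rV[R]_d with
  | vbase => gX G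
  | vstep d1 d2 N' L =>
      let h := eval_v d1 N' G in
      fun v => vUP d1 d2 L (h v)
        (vM d1 d2 L [seq (h v, h u, xVG G v, xVG G u, gE G u v)
               | u <- enum 'I_(gn G) & gadj G v u])
  end.

Fixpoint eval_e d (N : gsne d) (G : graph R d0 de) : 'I_(gn G) -> 'rV[R]_d :=
  match N in gsne d return 'I_(gn G) -> 'rV[R]_d with
  | ebase => gX G
  | estep d1 d2 N' L =>
      let h := eval_e d1 N' G in
      fun v => eUP d1 d2 L (h v)
        (eM d1 d2 L [seq (h v, h u, xEG G u v, gE G u v)
               | u <- enum 'I_(gn G) & gadj G v u])
  end.

Definition vfun (d : nat) := forall G : graph R d0 de, 'I_(gn G) -> 'rV[R]_d.
Definition gfun (m : nat) := graph R d0 de -> 'rV[R]_m.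

Definition CV_vertex d (f : vfun d) : Prop :=
  exists N : gsnv d, forall G, simple_graph G -> forall v, f G v = eval_v d N G v.
Definition CE_vertex d (f : vfun d) : Prop :=
  exists N : gsne d, forall G, simple_graph G -> forall v, f G v = eval_e d N G v.

Definition CV_graph m (f : gfun m) : Prop :=
  exists d (N : gsnv d) (RO : list 'rV[R]_d -> 'rV[R]_m), and (multiset_fun _ _ RO)
    (forall G, simple_graph G ->
       f G = RO [seq eval_v d N G v | v <- enum 'I_(gn G)]).
Definition CE_graph m (f : gfun m) : Prop :=
  exists d (N : gsne d) (RO : list 'rV[R]_d -> 'rV[R]_m), and (multiset_fun _ _ RO)
    (forall G, simple_graph G ->
       f G = RO [seq eval_e d N G v | v <- enum 'I_(gn G)]).
End GSN.

From Pilot Require Import Defs.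
From mathcomp Require Import all_boot all_algebra reals.
From mathcomp Require Import fingroup perm.
From Stdlib Require Import Permutation FunctionalExtensionality.
Import GRing.Theory Num.Theory.
Set Implicit Arguments. Unset Strict Implicit.

(* One GSN-e layer can compute the vertex counts x^V from the edge counts x^E.
   Let O be the orbit of a vertex w of H.  A copy of H in which v plays a role
   in O has exactly deg_H(w) edges (u, v) into v, and the pair playing the
   role of (u, v) lies in an edge orbit whose second components are in O;
   double counting gives
     deg_H(w) * x^V_O(v) = sum_(u ~ v) sum_(O' ends in O) x^E_O'(u, v).
   If deg_H(w) = 0, connectivity forces H to be a single vertex and
   x^V_O(v) = 1.  So a first GSN-e layer appends an encoding of x^V_v to the
   vertex state; each GSN-v layer is then simulated by a GSN-e layer which
   decodes x^V_v, x^V_u from the carried coordinates, and a last layer drops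
   these coordinates. *)

Lemma card_set_sum (T : finType) (P : pred T) : #|[set x | P x]| = \sum_x (P x : nat).
Proof. by rewrite -sum1dep_card big_mkcond; apply: eq_bigr => x _; case: (P x). Qed.

Lemma big_Permutation (V : Type) (idx : V) (op : Monoid.com_law idx) (A : Type)
    (F : A -> V) (s1 s2 : list A) :
  Permutation s1 s2 -> \big[op/idx]_(x <- s1) F x = \big[op/idx]_(x <- s2) F x.
Proof.
elim=> [|x l l' _ IH|x y l|l l' l'' _ IH1 _ IH2] //.
- by rewrite !big_cons IH.
- by rewrite !big_cons Monoid.mulmCA.
- by rewrite IH1 IH2.
Qed.

Section Automorphisms.
Variable H : pattern.

Lemma autHP (g : {perm 'I_(pk H)}) :
  reflect (forall a b, padj H (g a) (g b) = padj H a b) (g \in autH H).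
Proof.
rewrite inE; apply: (iffP forallP) => [h a b | h a].
  by have /forallP/(_ b)/eqP := h a.
by apply/forallP => b; rewrite h.
Qed.

Lemma autH_group_set : group_set (autH H).
Proof.
apply/group_setP; split=> [|g h /autHP Hg /autHP Hh]; apply/autHP => a b.
  by rewrite !perm1.
by rewrite !permM Hh Hg.
Qed.

Canonical autH_group := Group autH_group_set.

Lemma vorbit_refl w : w \in vorbit H w.
Proof. by apply/imsetP; exists 1%g; rewrite ?perm1. Qed.

Lemma vorbit_aut w g a : g \in autH H -> a \in vorbit H w -> g a \in vorbit H w.
Proof.
move=> Hg /imsetP [g' Hg' ->]; apply/imsetP; exists (g' * g)%g.
  exact: groupM.
by rewrite permM.
Qed.

Lemma eorbit_refl p : p \in eorbit H p.
Proof. by apply/imsetP; exists 1%g; rewrite ?perm1 //; case: p. Qed.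

Lemma eorbit_aut p g q :
  g \in autH H -> q \in eorbit H p -> (g q.1, g q.2) \in eorbit H p.
Proof.
move=> Hg /imsetP [g' Hg' ->]; apply/imsetP; exists (g' * g)%g.
  exact: groupM.
by rewrite !permM.
Qed.

Lemma eorbit_transl p q : q \in eorbit H p -> eorbit H q = eorbit H p.
Proof.
move=> /imsetP [g Hg ->]; apply/setP => r; apply/imsetP/imsetP => -[h Hh ->] /=.
  by exists (g * h)%g; rewrite ?groupM ?permM.
by exists (g^-1 * h)%g; rewrite ?groupM ?groupV // !permM !permK.
Qed.

Definition degH (a : 'I_(pk H)) := #|[set b | padj H b a]|.

Lemma degH_aut g a : g \in autH H -> degH (g a) = degH a.
Proof.
move=> /autHP Hg; rewrite /degH -[RHS](card_imset _ (@perm_inj _ g)).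
apply: eq_card => b; rewrite inE; apply/idP/imsetP => [hb | [c]].
  by exists (g^-1 b)%g; rewrite ?permKV // inE -Hg permKV.
by rewrite inE => hc ->; rewrite Hg.
Qed.

Definition ends_in (O : {set 'I_(pk H)}) (O' : {set 'I_(pk H) * 'I_(pk H)}) :=
  [forall q in O', q.2 \in O].

End Automorphisms.

Section Isomorphisms.
Variables (n : nat) (adj : rel 'I_n) (H : pattern).
Implicit Types (S : {set 'I_n}) (Es : {set 'I_n * 'I_n}) (f : {ffun 'I_n -> 'I_(pk H)}).

Lemma is_iso_inj S Es f : is_iso n H S Es f -> {in S &, injective f}.
Proof.
case/andP => /andP [/forall_inP h _] _ a b aS bS e.
by have /forall_inP/(_ b bS)/implyP/(_ (introT eqP e))/eqP := h a aS.
Qed.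

Lemma is_iso_onto S Es f x : is_iso n H S Es f -> exists2 a, a \in S & f a = x.
Proof.
case/andP => /andP [_ /eqP h] _.
have : x \in f @: S by rewrite h inE.
by case/imsetP => a aS ->; exists a.
Qed.

Lemma is_iso_adj S Es f a b : is_iso n H S Es f -> a \in S -> b \in S ->
  ((a, b) \in Es) = padj H (f a) (f b).
Proof.
by case/andP => _ /forall_inP h aS bS; have /forall_inP/(_ b bS)/eqP := h a aS.
Qed.

Lemma subgraph_edge S Es a b : is_subgraph n adj S Es -> (a, b) \in Es ->
  [/\ adj a b, a \in S, b \in S & (b, a) \in Es].
Proof. by move=> /forallP/(_ a)/forallP/(_ b)/implyP h /h /and4P []. Qed.

Lemma is_iso_autH S Es f f' : is_iso n H S Es f -> is_iso n H S Es f' ->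
  exists2 g, g \in autH H & {in S, forall a, f' a = g (f a)}.
Proof.
move=> isf isf'.
pose h x := if [pick a in S | f a == x] is Some a then f' a else x.
have hP x : exists2 a, a \in S & f a = x /\ h x = f' a.
  rewrite /h; case: pickP => [a /andP [aS /eqP fa] | none]; first by exists a.
  have [a aS fa] := is_iso_onto x isf.
  by have := none a; rewrite aS fa eqxx.
have h_inj : injective h.
  move=> x y e; have [a aS [fa ha]] := hP x; have [b bS [fb hb]] := hP y.
  by rewrite -fa -fb; congr (f _); apply: (is_iso_inj isf') => //; rewrite -ha -hb.
exists (perm h_inj).
  apply/autHP => x y; rewrite !permE.
  have [a aS [<- ->]] := hP x; have [b bS [<- ->]] := hP y.
  by rewrite -(is_iso_adj isf' aS bS) (is_iso_adj isf aS bS).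
move=> a aS; rewrite permE.
by have [b bS [/(is_iso_inj isf bS aS) -> ->]] := hP (f a).
Qed.

Lemma degH_is_iso S Es f v : is_subgraph n adj S Es -> is_iso n H S Es f ->
  v \in S -> #|[set u | (u, v) \in Es]| = degH (f v).
Proof.
move=> sub isf vS; have inS u : (u, v) \in Es -> u \in S.
  by case/(subgraph_edge sub).
rewrite /degH -(card_in_imset (f := f)); last first.
  by move=> a b; rewrite !inE => /inS aS /inS bS; exact: (is_iso_inj isf).
apply: eq_card => b; rewrite [in RHS]inE; apply/imsetP/idP => [[u] | ].
  by rewrite inE => hu ->; rewrite -(is_iso_adj isf (inS u hu) vS).
have [a aS <-] := is_iso_onto b isf => fav.
by exists a; rewrite // inE (is_iso_adj isf aS vS).
Qed.

End Isomorphisms.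

Section Copies.
Variables (n : nat) (adj : rel 'I_n) (H : pattern).
Implicit Types (S : {set 'I_n}) (Es : {set 'I_n * 'I_n}) (f : {ffun 'I_n -> 'I_(pk H)}).

Definition vcopies (v : 'I_n) (O : {set 'I_(pk H)}) :=
  [set SE : {set 'I_n} * {set 'I_n * 'I_n} |
     [&& is_subgraph n adj SE.1 SE.2, v \in SE.1 &
         [exists f, is_iso n H SE.1 SE.2 f && (f v \in O)]]].

Definition ecopies (u v : 'I_n) (O : {set 'I_(pk H)}) :=
  [set SE : {set 'I_n} * {set 'I_n * 'I_n} |
     [&& is_subgraph n adj SE.1 SE.2, (u, v) \in SE.2 &
         [exists f, is_iso n H SE.1 SE.2 f && (f v \in O)]]].

Lemma exists_is_iso_vorbit S Es f0 v w : is_iso n H S Es f0 -> v \in S ->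
  [exists f, is_iso n H S Es f && (f v \in vorbit H w)] = (f0 v \in vorbit H w).
Proof.
move=> isf0 vS; apply/existsP/idP => [[f /andP [isf fv]] | h].
  by have [g Hg ->] := is_iso_autH isf isf0; rewrite ?vorbit_aut.
by exists f0; rewrite isf0.
Qed.

Lemma exists_is_iso_eorbit S Es f0 u v p : is_iso n H S Es f0 -> u \in S -> v \in S ->
  [exists f, is_iso n H S Es f && ((f u, f v) \in eorbit H p)]
  = ((f0 u, f0 v) \in eorbit H p).
Proof.
move=> isf0 uS vS; apply/existsP/idP => [[f /andP [isf fuv]] | h].
  by have [g Hg e] := is_iso_autH isf isf0; rewrite !e //; apply: eorbit_aut Hg fuv.
by exists f0; rewrite isf0.
Qed.

Lemma sum_card_ecopies v w :
  \sum_u #|ecopies u v (vorbit H w)| = #|vcopies v (vorbit H w)| * degH w.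
Proof.
under eq_bigr do rewrite card_set_sum.
rewrite exchange_big card_set_sum big_distrl /=; apply: eq_bigr => -[S Es] _ /=.
case: (boolP (is_subgraph n adj S Es)) => sub /=; last by rewrite big1.
case: (boolP [exists f, is_iso n H S Es f && (f v \in vorbit H w)]) => /= [E|_].
  case: (boolP (v \in S)) => vS /=; last first.
    rewrite big1 // => u _; rewrite andbT.
    case: (boolP ((u, v) \in Es)) => // /(subgraph_edge sub) [_ _ vS' _].
    by rewrite vS' in vS.
  have [f0 /andP [isf0 /imsetP [g Hg fv]]] := existsP E.
  rewrite mul1n -(degH_aut w Hg) -fv -(degH_is_iso sub isf0 vS) card_set_sum.
  by apply: eq_bigr => u _; rewrite andbT.
by rewrite andbF big1 // => u _; rewrite andbF.
Qed.

Lemma card_ecopies u v w :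
  #|ecopies u v (vorbit H w)|
  = \sum_(O' | (O' \in eorbits H) && ends_in (vorbit H w) O') xE n adj H u v O'.
Proof.
set O := vorbit H w.
under eq_bigr => O' /andP [HO' _] do rewrite /xE HO' card_set_sum.
rewrite exchange_big card_set_sum; apply: eq_bigr => -[S Es] _ /=.
case: (boolP (is_subgraph n adj S Es)) => sub /=; last by rewrite big1.
case: (boolP ((u, v) \in Es)) => uv /=; last by rewrite big1.
have [_ uS vS _] := subgraph_edge sub uv.
have [f0 isf0 | no_iso] := pickP (is_iso n H S Es); last first.
  have noE (P : pred {ffun 'I_n -> 'I_(pk H)}) :
      [exists f, is_iso n H S Es f && P f] = false.
    by apply/existsP => -[f /andP [isf _]]; rewrite no_iso in isf.
  by rewrite noE big1 // => O' _; rewrite noE.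
rewrite (exists_is_iso_vorbit _ isf0 vS).
set p0 := (f0 u, f0 v).
have p0E : eorbit H p0 \in eorbits H.
  by apply/imsetP; exists p0; rewrite // inE -(is_iso_adj isf0 uS vS).
transitivity (\sum_(O' | (O' \in eorbits H) && ends_in O O') (O' == eorbit H p0 : nat)).
  have [p0O | p0O] := boolP (ends_in O (eorbit H p0)).
    rewrite (bigD1 (eorbit H p0)) /= ?p0E // eqxx big1 ?addn0.
      by have /forall_inP/(_ p0 (eorbit_refl p0)) -> := p0O.
    by move=> O' /andP [_ /negbTE ->].
  rewrite big1 => [|O' /andP [_ O'O]]; last by case: eqP O'O => // ->; rewrite (negbTE p0O).
  case: (boolP (f0 v \in O)) => // f0v; case/negP: p0O.
  by apply/forall_inP => q /imsetP [g Hg ->]; apply: vorbit_aut.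
apply: eq_bigr => O' /andP [/imsetP [p _ ->] _].
rewrite (exists_is_iso_eorbit _ isf0 uS vS).
by congr (nat_of_bool _); apply/eqP/idP => [-> | /eorbit_transl //]; apply: eorbit_refl.
Qed.

Lemma card_vcopies_isolated v w : pattern_ok H -> degH w = 0 ->
  #|vcopies v (vorbit H w)| = 1.
Proof.
case=> Hsym Hirr _ Hconn deg0.
have allw b : b = w.
  have /connectP [[|a p] //= /andP [wa _] ->] := Hconn w b.
  have : a \in [set b | padj H b w] by rewrite inE Hsym.
  by move/cards0_eq: deg0 => ->; rewrite inE.
rewrite -(cards1 (([set v], set0) : {set 'I_n} * {set 'I_n * 'I_n})).
apply: eq_card => -[S Es]; rewrite !inE /=; apply/idP/eqP.
  case/and3P => sub vS /existsP [f /andP [isf _]]; congr (_, _); apply/setP.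
    move=> a; rewrite inE; apply/idP/eqP => [aS | -> //].
    exact: (is_iso_inj isf aS vS (etrans (allw _) (esym (allw _)))).
  move=> [a b]; rewrite inE; apply/negP => e; have [_ aS bS _] := subgraph_edge sub e.
  by move: e; rewrite (is_iso_adj isf aS bS) (allw (f a)) (allw (f b)) Hirr.
case=> -> ->; apply/and3P; split; [|by rewrite inE|].
  by apply/forallP => a; apply/forallP => b; rewrite inE.
apply/existsP; exists [ffun _ => w]; rewrite ffunE vorbit_refl andbT /is_iso.
apply/andP; split; first (apply/andP; split).
- by apply/forall_inP => a /set1P ->; apply/forall_inP => b /set1P ->; rewrite !eqxx.
- apply/eqP/setP => x; rewrite inE (allw x); apply/imsetP; exists v; rewrite ?inE ?ffunE //.
- by apply/forall_inP => a _; apply/forall_inP => b _; rewrite inE !ffunE Hirr.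
Qed.

End Copies.

Local Open Scope ring_scope.

Section VertexCountsFromEdgeCounts.
Variables (R : realType) (n : nat) (adj : rel 'I_n) (H : pattern).
Hypotheses (H_ok : pattern_ok H) (adj_sym : symmetric adj).

Definition orbit_deg (O : {set 'I_(pk H)}) : nat :=
  if [pick a in O] is Some a then degH a else 0%N.

Definition xV_isolated (O : {set 'I_(pk H)}) : R :=
  if (O \in vorbits H) && (orbit_deg O == 0%N) then 1 else 0.

Definition xV_edge_share (O : {set 'I_(pk H)})
    (xe : {set 'I_(pk H) * 'I_(pk H)} -> nat) : R :=
  if (O \in vorbits H) && (orbit_deg O != 0%N) then
    (\sum_(O' | (O' \in eorbits H) && ends_in O O') xe O')%:R / (orbit_deg O)%:R
  else 0.

Lemma orbit_deg_vorbit w : orbit_deg (vorbit H w) = degH w.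
Proof.
rewrite /orbit_deg; case: pickP => [a /imsetP [g Hg ->] | /(_ w)].
  exact: degH_aut.
by rewrite vorbit_refl.
Qed.

Lemma xV_from_xE v O :
  xV_isolated O + \sum_(u | adj v u) xV_edge_share O (xE n adj H u v)
  = (xV n adj H v O)%:R.
Proof.
rewrite /xV_isolated /xV_edge_share /xV.
have [/imsetP [w _ ->] | _] := boolP (O \in vorbits H); last by rewrite big1 ?addr0.
rewrite orbit_deg_vorbit -/(vcopies adj v _).
have [deg0 | deg_neq0] := eqVneq (degH w) 0%N.
  by rewrite big1 ?addr0 // card_vcopies_isolated.
rewrite add0r -mulr_suml -natr_sum.
apply: (mulIf (x := (degH w)%:R)); first by rewrite pnatr_eq0.
rewrite mulfVK ?pnatr_eq0 // -natrM -sum_card_ecopies; congr (_%:R).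
rewrite [RHS](bigID (adj v)) /= [X in (_ + X)%N]big1 ?addn0.
  by apply: eq_bigr => u _; rewrite card_ecopies.
move=> u nvu; apply/eqP; rewrite cards_eq0; apply/eqP/setP => -[S Es].
rewrite !inE; apply/negP => /and3P [sub uv _].
by have [a _ _ _] := subgraph_edge sub uv; rewrite adj_sym a in nvu.
Qed.

End VertexCountsFromEdgeCounts.

Section Simulation.
Variables (R : realType) (J : finType) (Hs : J -> pattern) (d0 de : nat).
Hypothesis Hs_ok : forall j, pattern_ok (Hs j).

Local Notation graph := (graph R d0 de).
Local Notation featV := (featV J Hs).
Local Notation gsnv := (gsnv R J Hs d0 de).
Local Notation gsne := (gsne R J Hs d0 de).
Local Notation vlayer := (vlayer R J Hs de).
Local Notation elayer := (elayer R J Hs de).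
Local Notation ELayer := (ELayer R J Hs de).
Local Notation vm L := (Defs.vm R J Hs de _ _ L).
Local Notation vM L := (Defs.vM R J Hs de _ _ L).
Local Notation vUP L := (Defs.vUP R J Hs de _ _ L).
Local Notation estep := (estep R J Hs d0 de).
Local Notation eval_v := (eval_v R J Hs d0 de _).
Local Notation eval_e := (eval_e R J Hs d0 de _).
Local Notation xVG := (xVG R J Hs d0 de).
Local Notation xEG := (xEG R J Hs d0 de).

Definition featV_index := {j : J & {set 'I_(pk (Hs j))}}.
Local Notation nfeat := #|{: featV_index}|.

Definition encode_featV (x : featV) : 'rV[R]_nfeat :=
  \row_i (x (tag (enum_val i)) (tagged (enum_val i)))%:R.

Definition decode_featV (c : 'rV[R]_nfeat) : featV := fun j O =>
  Num.truncn (c ord0 (enum_rank (Tagged (fun j => {set 'I_(pk (Hs j))}) O : featV_index))).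

Lemma encode_featVK : cancel encode_featV decode_featV.
Proof.
move=> x; apply: functional_extensionality_dep => j.
apply: functional_extensionality => O.
by rewrite /decode_featV mxE enum_rankK natrK.
Qed.

Definition featV_msg (s : list (msgE R J Hs de d0)) : 'rV[R]_nfeat :=
  \row_i xV_isolated R (tagged (enum_val i))
  + \sum_(m <- s) \row_i xV_edge_share R (tagged (enum_val i)) (m.1.2 (tag (enum_val i))).

Lemma featV_msg_multiset : multiset_fun _ _ featV_msg.
Proof. by move=> s1 s2 s12; rewrite /featV_msg (big_Permutation _ _ s12). Qed.

Definition featV_layer : elayer d0 (d0 + nfeat) :=
  ELayer d0 (d0 + nfeat) nfeat featV_msg featV_msg_multiset (fun h m => row_mx h m).

Definition vmsg_of_emsg d (m : msgE R J Hs de (d + nfeat)) : msgV R J Hs de d :=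
  (lsubmx m.1.1.1, lsubmx m.1.1.2,
   decode_featV (rsubmx m.1.1.1), decode_featV (rsubmx m.1.1.2), m.2).

Lemma vM_emsg_multiset d1 d2 (L : vlayer d1 d2) :
  multiset_fun _ _ (fun s => vM L (map (@vmsg_of_emsg d1) s)).
Proof. by move=> s1 s2 s12; apply: vM_ms; apply: Permutation_map. Qed.

Definition elayer_of_vlayer d1 d2 (L : vlayer d1 d2) : elayer (d1 + nfeat) (d2 + nfeat) :=
  ELayer (d1 + nfeat) (d2 + nfeat) (vm L) _ (vM_emsg_multiset L)
    (fun h m => row_mx (vUP L (lsubmx h) m) (rsubmx h)).

Fixpoint gsne_with_featV d (N : gsnv d) : gsne (d + nfeat) :=
  match N in Defs.gsnv _ _ _ _ _ d return gsne (d + nfeat) with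
  | vbase => estep d0 (d0 + nfeat) (ebase R J Hs d0 de) featV_layer
  | vstep d1 d2 N' L =>
      estep (d1 + nfeat) (d2 + nfeat) (gsne_with_featV N') (elayer_of_vlayer L)
  end.

Definition drop_featV_layer d : elayer (d + nfeat) d :=
  ELayer (d + nfeat) d 0 (fun _ => 0) (fun _ _ _ => erefl) (fun h _ => lsubmx h).

Definition gsne_of_gsnv d (N : gsnv d) : gsne d :=
  estep (d + nfeat) d (gsne_with_featV N) (drop_featV_layer d).

Lemma featV_msgE (G : graph) v : simple_graph G ->
  featV_msg [seq (gX G v, gX G u, xEG G u v, gE G u v) | u <- enum 'I_(gn G) & gadj G v u]
  = encode_featV (xVG G v).
Proof.
case=> G_sym _; apply/rowP => i.
rewrite !mxE summxE big_map big_filter big_enum_cond /=.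
under eq_bigr do rewrite mxE.
exact: xV_from_xE (Hs_ok (tag (enum_val i))) G_sym _ _.
Qed.

Lemma eval_gsne_with_featV d (N : gsnv d) (G : graph) v : simple_graph G ->
  eval_e (gsne_with_featV N) G v = row_mx (eval_v N G v) (encode_featV (xVG G v)).
Proof.
move=> sG; elim: N v => [|d1 d2 N IH L] v /=; first by rewrite featV_msgE.
rewrite IH row_mxKl row_mxKr -map_comp; congr (row_mx (vUP L _ (vM L _)) _).
by apply: eq_map => u /=; rewrite /vmsg_of_emsg /= !IH !row_mxKl !row_mxKr !encode_featVK.
Qed.

Lemma eval_gsne_of_gsnv d (N : gsnv d) (G : graph) v : simple_graph G ->
  eval_e (gsne_of_gsnv N) G v = eval_v N G v.
Proof. by move=> sG; rewrite /= eval_gsne_with_featV // row_mxKl. Qed.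

End Simulation.

Theorem theorem3p3 (R : realType) (J : finType) (Hs : J -> pattern)
  (Hok : forall j, pattern_ok (Hs j)) (d0 de : nat) :
  (forall (d : nat) (f : vfun R d0 de d),
     CV_vertex R J Hs d0 de d f -> CE_vertex R J Hs d0 de d f) /\
  (forall (m : nat) (f : gfun R d0 de m),
     CV_graph R J Hs d0 de m f -> CE_graph R J Hs d0 de m f).
Proof.
split=> [d f [N fN] | m f [d [N [RO [RO_multiset fN]]]]].
  by exists (gsne_of_gsnv N) => G sG v; rewrite fN // (eval_gsne_of_gsnv Hok).
exists d, (gsne_of_gsnv N), RO; split=> // G sG.
by rewrite fN //; congr RO; apply: eq_map => v; rewrite (eval_gsne_of_gsnv Hok).
Qed.
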